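(* Let $a,b\in\mathbb{Z}$ with $\gcd(a,b)=1$, and suppose $\{G_n(a,b)\}$ has the same Gibonacci cycle mod $5$ as the Lucas numbers, i.e. there exists $r\ge0$ with $G_n(a,b)\equiv L_{n+r}\pmod 5$ for all $n\ge1$. Then $M_{(a,b)}=M_L$, where $M_L=\{2,4,6,7,14\}\cup\{3^j: j\ge1\}$.
   Context: For integers $a,b$ with $\gcd(a,b)=1$, the Gibonacci sequence $\{G_n(a,b)\}_{n\ge1}$ is defined by $G_1=a$, $G_2=b$, $G_{n+1}=G_{n-1}+G_n$. The Lucas numbers are $L_n=G_n(1,3)$. A sequence is complete mod $m$ if every residue class modulo $m$ contains some term of the sequence. $M_{(a,b)}$ denotes the set of integers $m\ge2$ such that $\{G_n(a,b)\}$ is complete mod $m$, and $M_L=M_{(1,3)}$. *)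

From mathcomp Require Import all_boot all_order all_algebra.
Set Implicit Arguments. Unset Strict Implicit. Unset Printing Implicit Defensive.
Import GRing.Theory Num.Theory.
Local Open Scope ring_scope.

(* gib_pair a b k = (G_{k+1}, G_{k+2}) for the Gibonacci sequence G_1 = a, G_2 = b. *)
Fixpoint gib_pair (a b : int) (k : nat) : int * int :=
  match k with
  | 0%N => (a, b)
  | k'.+1 => let p := gib_pair a b k' in (p.2, p.1 + p.2)
  end.

(* G_n(a,b), meaningful for n >= 1 (G 0 is a junk value equal to a). *)
Definition gib (a b : int) (n : nat) : int := (gib_pair a b n.-1).1.

Definition lucas (n : nat) : int := gib 1 3 n.

Definition complete_mod (a b : int) (m : nat) : Prop :=
  forall x : int, exists n : nat, (1 <= n)%N /\ (gib a b n = x %[mod m%:Z])%Z.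

Definition inM (a b : int) (m : nat) : Prop := (2 <= m)%N /\ complete_mod a b m.

Definition inML (m : nat) : Prop := inM 1 3 m.

(* Let G = G(a,b) with gcd(a,b) = 1 and G_n = L_(n+r) mod 5 for all n >= 1.
   We show that G is complete modulo m exactly when m lies in
   M_L = {2, 4, 6, 7, 14} u {3^j | j >= 1}; applied to G and to the Lucas
   sequence itself (r = 0) this gives both halves of the theorem.

   Necessity.  Completeness modulo m passes to the divisors of m.  The Lucas
   numbers are never 0 mod 5, so 5 does not divide m.  For a prime p outside
   {2, 3, 5, 7, 17} no Gibonacci sequence is complete modulo p: if 5 is a
   square mod p, Binet's formula gives a period p - 1 < p; otherwise Cassini's
   identity makes 5 G_n^2 + 4c or 5 G_n^2 - 4c a square, and some v making
   both non-squares is never attained.  The moduli 17, 8, 12, 18, 21, 28, 49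
   are excluded by a finite computation over all seeds.  An elementary
   divisibility argument then places m in M_L.

   Sufficiency.  The moduli 2, 4, 6, 7, 14 are checked by computation over all
   coprime seeds; for 3^j a Hensel-type lifting along the Fibonacci period
   8 * 3^(j-1) modulo 3^j reaches every residue. *)

From mathcomp Require Import all_boot all_order all_algebra finfield.
From mathcomp Require Import zify ring.
Set Implicit Arguments. Unset Strict Implicit. Unset Printing Implicit Defensive.
Import GRing.Theory Num.Theory.
Local Open Scope ring_scope.

(* The Fibonacci pair (F_(k-1), F_k) is the transfer matrix of the Gibonacci
   recursion: shifting any Gibonacci pair by k steps is the linear map below. *)
Lemma gib_pair_add (a b : int) (m k : nat) :
  gib_pair a b (m + k) =
  ((gib_pair 1 0 k).1 * (gib_pair a b m).1 + (gib_pair 1 0 k).2 * (gib_pair a b m).2,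
   (gib_pair 1 0 k).2 * (gib_pair a b m).1
     + ((gib_pair 1 0 k).1 + (gib_pair 1 0 k).2) * (gib_pair a b m).2).
Proof.
elim: k => [|k IH]; first by rewrite addn0; case: (gib_pair a b m) => x y /=; congr (_, _); ring.
by rewrite addnS /= IH /=; congr (_, _); ring.
Qed.

Definition gib_norm (p : int * int) : int := p.2 ^+ 2 - p.2 * p.1 - p.1 ^+ 2.

Lemma gib_norm_pair (a b : int) (k : nat) :
  gib_norm (gib_pair a b k) = (-1) ^+ k * gib_norm (a, b).
Proof.
elim: k => [|k IH]; first by rewrite mul1r.
by rewrite exprS -mulrA -IH /gib_norm /=; ring.
Qed.

Lemma gib_pair_congr (d a b a' b' : int) (k : nat) :
  (d %| a - a')%Z -> (d %| b - b')%Z ->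
  (d %| (gib_pair a b k).1 - (gib_pair a' b' k).1)%Z /\
  (d %| (gib_pair a b k).2 - (gib_pair a' b' k).2)%Z.
Proof.
move=> da db; elim: k => [|k [IH1 IH2]] //=; split=> //.
by rewrite opprD addrACA rpredD.
Qed.

Lemma gib_congr (d a b a' b' : int) (n : nat) :
  (d %| a - a')%Z -> (d %| b - b')%Z -> (d %| gib a b n - gib a' b' n)%Z.
Proof. by move=> da db; case: (gib_pair_congr n.-1 da db). Qed.

Definition gib_step (m : int) (s : int * int) : int * int :=
  (s.2, ((s.1 + s.2) %% m)%Z).

Lemma iter_gib_step (m a b : int) (n : nat) :
  iter n (gib_step m) ((a %% m)%Z, (b %% m)%Z) =
  (((gib_pair a b n).1 %% m)%Z, ((gib_pair a b n).2 %% m)%Z).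
Proof. by elim: n => [|n IH] //=; rewrite IH /gib_step /= modzDm. Qed.

Lemma gib_mod (a b m : int) (n : nat) :
  (gib a b n %% m)%Z = (iter n.-1 (gib_step m) ((a %% m)%Z, (b %% m)%Z)).1.
Proof. by rewrite iter_gib_step. Qed.

Fixpoint residues (m : int) (k : nat) (x y : int) : seq int :=
  if k is k'.+1 then x :: residues m k' y ((x + y) %% m)%Z else [::].

Lemma residuesE (m : int) (k : nat) (x y : int) :
  residues m k x y = [seq (iter n (gib_step m) (x, y)).1 | n <- iota 0 k].
Proof.
elim: k x y => [|k IH] x y //=.
rewrite IH (iotaDl 1 0) -map_comp; congr (_ :: _).
by apply: eq_map => n; rewrite /comp add1n iterSr.
Qed.

Lemma residues_periodic (m : int) (P n : nat) (s : int * int) :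
  (0 < P)%N -> iter P (gib_step m) s = s ->
  (iter n (gib_step m) s).1 \in residues m P s.1 s.2.
Proof.
move=> P0 hP; have per q r : iter (q * P + r) (gib_step m) s = iter r (gib_step m) s.
  elim: q => [|q IH]; first by rewrite mul0n.
  by rewrite mulSn -addnA addnC iterD hP IH.
rewrite residuesE (divn_eq n P) per -surjective_pairing.
by apply: map_f; rewrite mem_iota ltn_pmod.
Qed.

(* The remainder mod m > 0 is a natural number among 0, ..., m - 1: this lets
   the decision procedures below range over seeds in iota 0 m. *)
Lemma residue_in_range (x : int) (m : nat) : (0 < m)%N ->
  (x %% m)%Z = (`|(x %% m)%Z|%N)%:Z /\ `|(x %% m)%Z|%N \in iota 0 m.
Proof.
move=> m0; have h0 : 0 <= (x %% m)%Z by rewrite modz_ge0 // -lt0n.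
have h1 : (x %% m)%Z < m%:Z by rewrite ltz_pmod // ltz_nat.
by split; [rewrite gez0_abs | rewrite mem_iota; lia].
Qed.

Definition incomplete_cert (m P : nat) : bool :=
  all (fun a => all (fun b =>
    (iter P (gib_step m) (a%:Z, b%:Z) == (a%:Z, b%:Z)) &&
    let orbit := residues m P a b in
    has (fun x : nat => x%:Z \notin orbit) (iota 0 m)) (iota 0 m)) (iota 0 m).

Lemma incomplete_certP (m P : nat) : (0 < m)%N -> (0 < P)%N ->
  incomplete_cert m P -> forall a b : int, ~ complete_mod a b m.
Proof.
move=> m0 P0 cert a b hc.
have [ea la] := residue_in_range a m0; have [eb lb] := residue_in_range b m0.
move/allP/(_ _ la)/allP/(_ _ lb): cert; rewrite -ea -eb => /andP [/eqP hP /hasP [x]].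
rewrite mem_iota add0n => /andP [_ xm] /negP []; have [n [_]] := hc x%:Z.
by rewrite gib_mod (modz_small (m := x%:Z)) ?ltz_nat // => <-; exact: residues_periodic.
Qed.

Definition complete_cert (m N : nat) : bool :=
  all (fun a => all (fun b => (gcdn (gcdn a b) m != 1%N) ||
    let orbit := residues m N a b in
    all (fun x : nat => x%:Z \in orbit) (iota 0 m)) (iota 0 m)) (iota 0 m).

Lemma complete_certP (m N : nat) : (0 < m)%N ->
  complete_cert m N -> forall a b : int, coprimez a b -> complete_mod a b m.
Proof.
move=> m0 cert a b cab x.
have [ea la] := residue_in_range a m0; have [eb lb] := residue_in_range b m0.
have [ex lx] := residue_in_range x m0.
move/allP/(_ _ la)/allP/(_ _ lb): cert => /orP [|/allP/(_ _ lx)].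
  (* A common divisor g of the reduced seeds and m divides a and b. *)
  set g := gcdn _ _ => /negP [].
  suff : (g%:Z %| gcdz a b)%Z by rewrite (eqP cab) dvdz1.
  rewrite dvdz_gcd.
  have dvd_seed (y : int) : (y %% m)%Z = `|(y %% m)%Z|%N ->
      (g %| `|(y %% m)%Z|)%N -> (g%:Z %| y)%Z.
    by move=> ey hg; rewrite (divz_eq y m) ey rpredD // dvdz_mull //; exact: dvdn_gcdr.
  rewrite dvd_seed ?dvd_seed //; apply: (dvdn_trans (dvdn_gcdl _ _));
    by [exact: dvdn_gcdr | exact: dvdn_gcdl].
rewrite residuesE => /mapP [n _ hn]; exists n.+1; split => //; apply/eqP.
by rewrite gib_mod /= ea eb -hn -ex.
Qed.

Lemma complete_mod_dvd (a b : int) (m d : nat) :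
  complete_mod a b m -> (d %| m)%N -> complete_mod a b d.
Proof.
move=> complete d_dvd x; have [n [n1 /eqP hn]] := complete x; exists n; split=> //.
by apply/eqP; move: hn; rewrite !eqz_mod_dvd; apply: dvdz_trans.
Qed.

(* F_(8*3^i - 1) = 1 + 3^(i+1) u and F_(8*3^i) = 3^(i+1) v with u, v = 1 mod 3:
   modulo 3^(i+2), shifting a Gibonacci pair by 8*3^i is the matrix
   I + 3^(i+1) [[1, 1], [1, 2]], by induction on i (tripling the shift). *)
Lemma fib_pair_pow3 (i : nat) : exists al be : int,
  gib_pair 1 0 (8 * 3 ^ i) = (1 + 3 * 3 ^+ i * (1 + 3 * al), 3 * 3 ^+ i * (1 + 3 * be)).
Proof.
elim: i => [|i [al [be IH]]]; first by exists 1, 2.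
have -> : (8 * 3 ^ i.+1 = 8 * 3 ^ i + 8 * 3 ^ i + 8 * 3 ^ i)%N by rewrite expnS; lia.
rewrite (gib_pair_add 1 0 (8 * 3 ^ i + 8 * 3 ^ i)) (gib_pair_add 1 0 (8 * 3 ^ i)) IH /=.
set f := (3 : int) ^+ i; set u := 1 + 3 * al; set v := 1 + 3 * be.
exists (al + f * (u ^+ 2 + v ^+ 2) + f ^+ 2 * (u ^+ 3 + 3 * u * v ^+ 2 + v ^+ 3)).
exists (be + f * (2 * u * v + v ^+ 2) + f ^+ 2 * (3 * u ^+ 2 * v + 3 * u * v ^+ 2 + 2 * v ^+ 3)).
by rewrite exprS -/f /u /v; congr (_, _); ring.
Qed.

Lemma gib_shift_period (a b : int) (i n : nat) : (1 <= n)%N -> exists w : int,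
  gib a b (n + 8 * 3 ^ i) = gib a b n + 3 * 3 ^+ i * gib a b (n + 2) + 9 * 3 ^+ i * w.
Proof.
move=> hn; have [al [be H]] := fib_pair_pow3 i.
exists (al * (gib_pair a b n.-1).1 + be * (gib_pair a b n.-1).2); rewrite /gib.
have -> : ((n + 8 * 3 ^ i).-1 = n.-1 + 8 * 3 ^ i)%N by lia.
have -> : ((n + 2).-1 = n.-1 + 2)%N by lia.
by rewrite (gib_pair_add a b n.-1 (8 * 3 ^ i)) (gib_pair_add a b n.-1 2) H /=; ring.
Qed.

Lemma gib_shift_periods (a b : int) (i k n : nat) : (1 <= n)%N -> exists w : int,
  gib a b (n + k * (8 * 3 ^ i)) =
  gib a b n + 3 * 3 ^+ i * k%:R * gib a b (n + 2) + 9 * 3 ^+ i * w.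
Proof.
elim: k n => [|k IH] n hn; first by exists 0; rewrite mul0n addn0; ring.
have [w1 H1] := gib_shift_period a b i (leq_trans hn (leq_addr (k * (8 * 3 ^ i)) n)).
have [w2 H2] := IH (n + 2)%N (leq_trans hn (leq_addr 2 n)).
have [w3 H3] := IH n hn.
have -> : (n + k.+1 * (8 * 3 ^ i) = n + k * (8 * 3 ^ i) + 8 * 3 ^ i)%N by rewrite mulSn; lia.
have reorder : (n + k * (8 * 3 ^ i) + 2 = n + 2 + k * (8 * 3 ^ i))%N by lia.
rewrite H1 reorder H2 H3.
exists (w3 + 3 ^+ i * k%:R * gib a b (n + 2 + 2) + 3 * 3 ^+ i * w2 + w1).
by rewrite -addn1 natrD; ring.
Qed.

Lemma dvdz_sub_mod (d m : int) : (d %| m - (m %% d)%Z)%Z.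
Proof. by rewrite -eqz_mod_dvd modz_mod. Qed.

Definition mod3_cert : bool :=
  all (fun a => all (fun b => all (fun x => ((a == 0) && (b == 0))%N ||
    has (fun n => (3 %| gib a%:Z b%:Z n - x%:Z)%Z && ~~ (3 %| gib a%:Z b%:Z (n + 2))%Z)
      (iota 1 8)) (iota 0 3)) (iota 0 3)) (iota 0 3).

Lemma mod3_cert_valid : mod3_cert. Proof. by vm_compute. Qed.

Lemma gib_hits_mod3 (a b : int) : ~~ ((3 %| a)%Z && (3 %| b)%Z) -> forall x : int,
  exists n, [/\ (1 <= n)%N, (3 %| gib a b n - x)%Z & ~~ (3 %| gib a b (n + 2))%Z].
Proof.
move=> ab3 x.
have [ea la] := residue_in_range a (isT : 0 < 3)%N.
have [eb lb] := residue_in_range b (isT : 0 < 3)%N.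
have [ex lx] := residue_in_range x (isT : 0 < 3)%N.
have congr_a := dvdz_sub_mod 3 a; have congr_b := dvdz_sub_mod 3 b.
move/allP/(_ _ la)/allP/(_ _ lb)/allP/(_ _ lx): mod3_cert_valid; rewrite -ea -eb -ex.
case/orP => [/andP [/eqP a0 /eqP b0] | /hasP [n]].
  by case/negP: ab3; apply/andP; split; apply/dvdz_mod0P; [rewrite ea a0 | rewrite eb b0].
rewrite mem_iota => /andP [n1 _] /andP [hit unit]; exists n; split=> //.
  have -> : gib a b n - x = (gib a b n - gib (a %% 3)%Z (b %% 3)%Z n)
      + (gib (a %% 3)%Z (b %% 3)%Z n - (x %% 3)%Z) - (x - (x %% 3)%Z) by ring.
  by rewrite rpredB ?dvdz_sub_mod // rpredD // gib_congr.
apply: contra unit => h.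
have -> : gib (a %% 3)%Z (b %% 3)%Z (n + 2) = gib a b (n + 2)
    - (gib a b (n + 2) - gib (a %% 3)%Z (b %% 3)%Z (n + 2)) by ring.
by rewrite rpredB // gib_congr.
Qed.

(* If e is a unit mod 3, then d + k e = 0 mod 3 for a suitable k in N
   (k = -de mod 3 works since e^2 = 1 mod 3). *)
Lemma mod3_cancel (d e : int) : ~~ (3 %| e)%Z ->
  exists k : nat, (3 %| d + k%:R * e)%Z.
Proof.
move=> e3; exists `|((- (d * e)) %% 3)%Z|%N.
rewrite natz gez0_abs ?modz_ge0 //.
have unit_sq : (3 %| 1 - e * e)%Z by nia.
have -> : d + (- (d * e) %% 3)%Z * e =
    d * (1 - e * e) + (- (d * e) - (- (d * e) %% 3)%Z) * - e by ring.
by apply: rpredD; [exact: dvdz_mull | exact/dvdz_mulr/dvdz_sub_mod].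
Qed.

Lemma gib_hits_pow3 (a b : int) : ~~ ((3 %| a)%Z && (3 %| b)%Z) -> forall (i : nat) (x : int),
  exists n, [/\ (1 <= n)%N, (3 * 3 ^+ i %| gib a b n - x)%Z & ~~ (3 %| gib a b (n + 2))%Z].
Proof.
move=> ab3; elim=> [|i IH] x; first by rewrite expr0 mulr1; exact: gib_hits_mod3.
have [n [n1 /dvdzP [d hd] unit]] := IH x.
set e := gib a b (n + 2) in unit; have [k hk] := mod3_cancel d unit.
have [w hw] := gib_shift_periods a b i k n1.
have [w2 hw2] := gib_shift_periods a b i k (leq_trans n1 (leq_addr 2 n)).
exists (n + k * (8 * 3 ^ i))%N; split; first by rewrite (leq_trans n1) ?leq_addr.
  have [t ht] := dvdzP hk.
  have -> : gib a b (n + k * (8 * 3 ^ i)) - x = 3 * 3 ^+ i.+1 * (t + w).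
    have en : gib a b n = d * (3 * 3 ^+ i) + x by rewrite -hd; ring.
    rewrite hw -/e en exprS.
    transitivity (3 * 3 ^+ i * (d + k%:R * e) + 9 * 3 ^+ i * w); first ring.
    by rewrite ht; ring.
  exact: dvdz_mulr.
have -> : (n + k * (8 * 3 ^ i) + 2 = n + 2 + k * (8 * 3 ^ i))%N by rewrite addnAC.
rewrite hw2 -/e; apply: contra unit => h.
have -> : e = (e + 3 * 3 ^+ i * k%:R * gib a b (n + 2 + 2) + 9 * 3 ^+ i * w2)
   - 3 * (3 ^+ i * k%:R * gib a b (n + 2 + 2) + 3 * 3 ^+ i * w2) by ring.
by rewrite rpredB // dvdz_mulr.
Qed.

Lemma complete_mod_pow3 (a b : int) (j : nat) : coprimez a b -> (1 <= j)%N ->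
  complete_mod a b (3 ^ j).
Proof.
move=> cab j1 x.
have ab3 : ~~ ((3 %| a)%Z && (3 %| b)%Z).
  by rewrite -dvdz_gcd (eqP cab) dvdz1.
have [n [n1 hx _]] := gib_hits_pow3 ab3 j.-1 x.
exists n; split=> //; apply/eqP; rewrite eqz_mod_dvd.
by rewrite -natz natrX -(prednK j1) exprS.
Qed.

(* Binet's formula in the form F_k - psi F_(k-1) = -psi phi^k (that is,
   phi^(k-1)), valid in any commutative ring containing the two roots phi, psi
   of X^2 - X - 1; here (gib_pair 1 0 k) = (F_(k-1), F_k). *)
Lemma fib_binet (R : comPzRingType) (phi psi : R) :
  phi + psi = 1 -> phi * psi = -1 -> forall k : nat,
  (gib_pair 1 0 k).2%:~R - psi * (gib_pair 1 0 k).1%:~R = - psi * phi ^+ k.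
Proof.
move=> sum_roots prod_roots; elim=> [|k IH] /=; first by rewrite expr0; ring.
rewrite exprS mulrCA -IH intrD; set X := _%:~R; set Y := _%:~R.
apply/eqP; rewrite -subr_eq0; apply/eqP.
transitivity (X * (1 + phi * psi) + Y * (1 - (phi + psi))); first ring.
by rewrite prod_roots sum_roots; ring.
Qed.

Lemma expf_card_pred (F : finFieldType) (x : F) : x != 0 -> x ^+ #|F|.-1 = 1.
Proof.
move=> x0; apply: (mulIf x0); rewrite mul1r -exprSr prednK ?expf_card //.
by rewrite (cardD1 0).
Qed.

(* If 5 has a square root in a finite field F of characteristic not 2 or 5,
   then (F_(q-2), F_(q-1)) = (1, 0) in F, where q = #|F|: the Fibonacci
   sequence, hence every Gibonacci sequence, has period dividing q - 1. *)
Lemma fib_period_sqrt5 (F : finFieldType) (s : F) :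
  (2 : F) != 0 -> (5 : F) != 0 -> s * s = 5 ->
  (gib_pair 1 0 #|F|.-1).1%:~R = 1 :> F /\ (gib_pair 1 0 #|F|.-1).2%:~R = 0 :> F.
Proof.
move=> two0 five0 s2.
have four0 : (4 : F) != 0 by move: (mulf_neq0 two0 two0); rewrite -natrM.
pose phi := (1 + s) / 2; pose psi := (1 - s) / 2.
have sum_roots : phi + psi = 1 by rewrite /phi /psi; field.
have prod_roots : phi * psi = -1.
  have -> : phi * psi = (1 - s * s) / 4 by rewrite /phi /psi; field; rewrite four0.
  by rewrite s2; field.
have phi0 : phi != 0.
  by apply: contra_eq_neq prod_roots => ->; rewrite mul0r eq_sym oppr_eq0 oner_neq0.
have psi0 : psi != 0.
  by apply: contra_eq_neq prod_roots => ->; rewrite mulr0 eq_sym oppr_eq0 oner_neq0.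
have s0 : s != 0 by apply: contra_eq_neq s2 => ->; rewrite mulr0 eq_sym.
have e1 := fib_binet sum_roots prod_roots #|F|.-1.
have e2 := fib_binet (etrans (addrC _ _) sum_roots) (etrans (mulrC _ _) prod_roots) #|F|.-1.
rewrite !expf_card_pred // !mulr1 in e1 e2.
set X := (gib_pair 1 0 _).1%:~R in e1 e2 *; set Y := (gib_pair 1 0 _).2%:~R in e1 e2 *.
have X1 : X = 1.
  apply: (mulIf s0); rewrite mul1r.
  have -> : s = phi - psi by rewrite /phi /psi; field.
  transitivity ((Y - psi * X) - (Y - phi * X)); first ring.
  by rewrite e1 e2; ring.
split=> //; transitivity ((Y - psi * X) + psi * X); first ring.
by rewrite e1 X1; ring.
Qed.

Section FiniteFieldSquares.
Variable F : finFieldType.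

Definition square (x : F) : bool := [exists y, y * y == x].

Lemma square_sqr (y : F) : square (y * y).
Proof. by apply/existsP; exists y. Qed.

Lemma nonsquare_scale (x w : F) : ~~ square x -> w != 0 -> ~~ square (x * (w * w)).
Proof.
move=> nsq w0; apply: contra nsq => /existsP [y /eqP hy]; apply/existsP.
by exists (y / w); rewrite -[x](mulfK (mulf_neq0 w0 w0)) -hy; apply/eqP; field.
Qed.

Hypothesis two_neq0 : (2 : F) != 0.

(* Squaring is at most two-to-one, so at least half of F consists of squares. *)
Lemma card_squares : (#|F| <= 2 * #|[set x : F | square x]|)%N.
Proof.
pose g (x : F) := (x * x, (enum_rank x <= enum_rank (- x))%N).
have g_inj : injective g.
  move=> x y [] exy eb.
  have : (x - y) * (x + y) == 0.
    by rewrite (_ : _ * _ = x * x - y * y); [rewrite exy subrr | ring].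
  rewrite mulf_eq0 subr_eq0 addr_eq0 => /orP [/eqP // | /eqP xy]; subst x.
  rewrite opprK in eb.
  have /enum_rank_inj yy : enum_rank y = enum_rank (- y).
    apply: val_inj => /=; apply/eqP; rewrite eqn_leq.
    case/orP: (leq_total (enum_rank y) (enum_rank (- y))) => h; first by rewrite h eb h.
    by rewrite h -eb h.
  have : 2 * y == 0 by rewrite mulr2n mulrDl mul1r {2}yy subrr.
  by rewrite mulf_eq0 (negbTE two_neq0) => /eqP ->; rewrite oppr0.
have sub : [set g x | x in F] \subset setX [set x | square x] [set: bool].
  by apply/subsetP => _ /imsetP [x _ ->]; rewrite !inE square_sqr.
by move: (subset_leq_card sub); rewrite cardsX cardsT card_bool card_imset // cardT -cardE mulnC.
Qed.

Hypothesis odd_card : odd #|F|.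

(* Any two non-squares differ by a square factor: the nonzero squares form a
   subgroup of index 2 of the multiplicative group. *)
Lemma nonsquare_ratio (t u : F) : ~~ square t -> ~~ square u -> exists m, t = u * (m * m).
Proof.
move=> nst nsu.
have sq0 : square 0 by rewrite -(mulr0 0) square_sqr.
have u0 : u != 0 by apply: contraNneq nsu => ->.
pose S0 := [set x | square x] :\ 0.
have sub : [set u * x | x in S0] \subset ~: [set x | square x].
  apply/subsetP => z /imsetP [x]; rewrite !inE => /andP [x0 /existsP [m /eqP xm]] ->.
  by rewrite -xm nonsquare_scale //; apply: contra x0 => /eqP m0; rewrite -xm m0 mulr0.
have card_S0 : #|S0| = #|[set x | square x]|.-1.
  by rewrite (cardsD1 0 [set x | square x]) inE sq0 add1n.
have : [set u * x | x in S0] = ~: [set x | square x].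
  apply/eqP; rewrite eqEcard sub card_imset /=; last exact: mulfI u0.
  have := cardsC [set x | square x]; move: card_squares odd_card; rewrite card_S0.
  move: #|F| #|[set x | square x]| #|~: _| => q s c; lia.
move/setP/(_ t); rewrite !inE nst => /imsetP [x]; rewrite !inE => /andP [_ /existsP [m /eqP <-]] ->.
by exists m.
Qed.
End FiniteFieldSquares.

Lemma periodic_misses (T : finType) (h : nat -> T) (P : nat) : (0 < P)%N -> (P < #|T|)%N ->
  (forall k, h (k + P)%N = h k) -> exists y, forall k, h k != y.
Proof.
move=> P0 PT hP; pose A := [set h (val i) | i : 'I_P].
have cardA : (#|A| <= P)%N by rewrite (leq_trans (leq_imset_card _ _)) ?card_ord.
have : (0 < #|~: A|)%N by rewrite cardsCs setCK; lia.
case/card_gt0P => y; rewrite inE => yA; exists y => k; apply: contra yA => /eqP <-.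
have per q r : h (r + q * P)%N = h r.
  by elim: q => [|q IH]; rewrite ?addn0 // mulSnr addnA hP.
by rewrite (divn_eq k P) addnC per; apply/imsetP; exists (Ordinal (ltn_pmod k P0)).
Qed.

(* Cassini's identity in a field: 5 G_n^2 + 4c or 5 G_n^2 - 4c is a square,
   namely (2 G_(n+1) - G_n)^2, where c is the norm of the seed. *)
Lemma gib_square_constraint (F : finFieldType) (a b : int) (n : nat) :
  square (5 * (gib a b n)%:~R ^+ 2 + 4 * (gib_norm (a, b))%:~R : F) ||
  square (5 * (gib a b n)%:~R ^+ 2 - 4 * (gib_norm (a, b))%:~R : F).
Proof.
rewrite /gib; set X : F := _.1%:~R; set c : F := _%:~R.
pose Y : F := (gib_pair a b n.-1).2%:~R.
have normXY : Y * Y - Y * X - X * X = (-1) ^+ odd n.-1 * c.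
  rewrite signr_odd /c -intr_sign -[RHS]intrM -gib_norm_pair.
  by rewrite /gib_norm !expr2 !intrB !intrM.
have disc : (2 * Y - X) * (2 * Y - X) = 5 * X ^+ 2 + 4 * ((-1) ^+ odd n.-1 * c).
  by rewrite -normXY; ring.
by case: (odd n.-1) disc => /= disc; apply/orP; [right | left];
  apply/existsP; exists (2 * Y - X); rewrite disc; apply/eqP; ring.
Qed.

Section LargePrime.
Variable p : nat.
Hypothesis p_prime : prime p.
Hypothesis p_large : p \notin [:: 2; 3; 5; 7; 17]%N.

Local Notation F := 'F_p.

Lemma small_prime_neq0 (q : nat) : prime q -> q \in [:: 2; 3; 5; 7; 17]%N -> (q%:R : F) != 0.
Proof.
move=> q_prime q_small; rewrite -(dvdn_pcharf (pchar_Fp p_prime)) dvdn_prime2 //.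
by apply: contraNneq p_large => ->.
Qed.

Lemma odd_card_Fp : odd #|F|.
Proof.
rewrite card_Fp //; case: (even_prime p_prime) => // p2.
by move: p_large; rewrite p2.
Qed.

Lemma gib_periodic_sqrt5 (a b : int) : square (5 : F) ->
  forall k, ((gib_pair a b (k + p.-1)).1%:~R : F) = (gib_pair a b k).1%:~R.
Proof.
case/existsP=> s /eqP s2 k.
have [X1 Y0] := fib_period_sqrt5 (@small_prime_neq0 2 isT isT) (@small_prime_neq0 5 isT isT) s2.
rewrite card_Fp // in X1 Y0.
by rewrite gib_pair_add /= intrD !intrM X1 Y0; ring.
Qed.

(* If 5 is not a square mod p, then for every c some v makes both 5v^2 + 4c
   and 5v^2 - 4c non-squares: write c = 30t; if t = l^2 take v = 5l, giving
   5(7l)^2 and 5l^2; otherwise t = 5m^2 and v = 13m gives 5(17m)^2 and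
   5(7m)^2. *)
Lemma doubly_nonsquare (c : F) : ~~ square (5 : F) ->
  exists v : F, ~~ square (5 * v ^+ 2 + 4 * c) && ~~ square (5 * v ^+ 2 - 4 * c).
Proof.
move=> nsq5.
have [two0 three0 five0] : [/\ (2 : F) != 0, (3 : F) != 0 & (5 : F) != 0].
  by split; apply: small_prime_neq0.
have [seven0 seventeen0] : (7 : F) != 0 /\ (17 : F) != 0 by split; apply: small_prime_neq0.
have [->|c0] := eqVneq c 0; first by exists 1; rewrite mulr0 addr0 subr0 expr1n mulr1 nsq5.
pose t := c / 30.
have ct : c = 30 * t.
  rewrite /t mulrC divfK //; rewrite (_ : 30 = 2 * 3 * 5) ?mulf_neq0 //.
  by rewrite -!natrM.
have t0 : t != 0 by apply: contra_neq c0 => t0; rewrite ct t0 mulr0.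
have [sq_t | nsq_t] := boolP (square t).
  case/existsP: sq_t => l /eqP tl.
  have l0 : l != 0 by apply: contra_neq t0 => l0; rewrite -tl l0 mulr0.
  exists (5 * l); rewrite ct -tl.
  rewrite (_ : 5 * (5 * l) ^+ 2 + 4 * (30 * (l * l)) = 5 * ((7 * l) * (7 * l))); last by ring.
  rewrite (_ : 5 * (5 * l) ^+ 2 - 4 * (30 * (l * l)) = 5 * (l * l)); last by ring.
  by apply/andP; split; apply: nonsquare_scale; rewrite ?mulf_neq0.
have [m tm] := nonsquare_ratio two0 odd_card_Fp nsq_t nsq5.
have m0 : m != 0 by apply: contra_neq t0 => m0; rewrite tm m0 !mulr0.
exists (13 * m); rewrite ct tm.
rewrite (_ : 5 * (13 * m) ^+ 2 + 4 * (30 * (5 * (m * m))) = 5 * ((17 * m) * (17 * m))); last by ring.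
rewrite (_ : 5 * (13 * m) ^+ 2 - 4 * (30 * (5 * (m * m))) = 5 * ((7 * m) * (7 * m))); last by ring.
by apply/andP; split; apply: nonsquare_scale; rewrite ?mulf_neq0.
Qed.

(* Every Gibonacci sequence misses some residue class modulo p: by
   periodicity if 5 is a square mod p, by Cassini's identity otherwise. *)
Lemma gib_misses_residue (a b : int) :
  exists y : F, forall n, (1 <= n)%N -> (gib a b n)%:~R != y.
Proof.
have [sq5 | nsq5] := boolP (square (5 : F)).
  have p_gt1 := prime_gt1 p_prime.
  have [|||y hy] := periodic_misses (h := fun k => (gib_pair a b k).1%:~R : F) (P := p.-1).
  - by lia.
  - by rewrite card_Fp //; lia.
  - exact: gib_periodic_sqrt5.
  by exists y => n _; apply: hy.
have [v /andP [nsq_plus nsq_minus]] := doubly_nonsquare (gib_norm (a, b))%:~R nsq5.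
exists v => n _; apply: contraTneq (gib_square_constraint F a b n) => ->.
by rewrite negb_or nsq_plus nsq_minus.
Qed.

Lemma incomplete_mod_large_prime (a b : int) : ~ complete_mod a b p.
Proof.
move=> complete; have [y hy] := gib_misses_residue a b.
have [n [n1 /eqP]] := complete (y : nat)%:Z; apply/negP.
rewrite eqz_mod_dvd (dvdz_pcharf (pchar_Fp p_prime)) intrB subr_eq0.
by rewrite -natz mulrz_nat natr_Zp hy.
Qed.
End LargePrime.

Section Moduli.
Local Open Scope nat_scope.

Definition lucas_modulus (m : nat) : Prop :=
  m \in [:: 2; 4; 6; 7; 14] \/ exists j : nat, 1 <= j /\ m = 3 ^ j.

Definition forbidden_divisors : seq nat := [:: 8; 12; 18; 21; 28; 49].

Lemma lucas_modulus_step (q k : nat) : q \in [:: 2; 3; 7] -> lucas_modulus k ->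
  {in forbidden_divisors, forall d, ~~ (d %| q * k)} -> lucas_modulus (q * k).
Proof.
move=> hq [hk | [j [j1 ->]]] ok.
  left; move/allP: ok; apply/implyP; move: q hq; apply/allP.
  by move: k hk; apply/allP.
move: hq ok; rewrite !inE => /or3P [] /eqP -> ok.
- case: j j1 ok => [|[|j]] // _ ok; first by left.
  by have := ok 18 isT; rewrite !expnS !mulnA dvdn_mulr.
- by right; exists j.+1; rewrite expnS.
- case: j j1 ok => // j _ ok.
  by have := ok 21 isT; rewrite expnS mulnA dvdn_mulr.
Qed.

Lemma lucas_modulus_classification (m : nat) : 1 < m ->
  (forall q, prime q -> q %| m -> q \in [:: 2; 3; 7]) ->
  {in forbidden_divisors, forall d, ~~ (d %| m)} -> lucas_modulus m.
Proof.
elim/ltn_ind: m => m IH m1 primes_m ok_m.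
have q_prime := pdiv_prime m1; have q_dvd := pdiv_dvd m.
set q := pdiv m in q_prime q_dvd; set k := m %/ q.
have m_eq : m = q * k by rewrite mulnC divnK.
have hq := primes_m q q_prime q_dvd.
have [k_le1 | k_gt1] := leqP k 1.
  have k1 : k = 1 by nia.
  rewrite m_eq k1 muln1.
  by move: hq; rewrite !inE => /or3P [] /eqP ->; [left | right; exists 1 | left].
have k_dvd d : d %| k -> d %| m by rewrite m_eq => /dvdn_mull->.
rewrite m_eq; apply: lucas_modulus_step => //; last by rewrite -m_eq.
apply: IH => //; first by rewrite ltn_Pdiv ?prime_gt1 // ltnW.
- by move=> r r_prime /k_dvd; exact: primes_m.
- by move=> d /ok_m; apply: contra; exact: k_dvd.
Qed.

(* Moduli m for which no Gibonacci sequence is complete, each paired with a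
   common period of all Gibonacci sequences modulo m. *)
Definition incomplete_moduli : seq (nat * nat) :=
  [:: (17, 36); (8, 12); (12, 24); (18, 24); (21, 16); (28, 48); (49, 112)].

Lemma incomplete_moduli_certified :
  all (fun mP => [&& 0 < mP.1, 0 < mP.2 & incomplete_cert mP.1 mP.2]) incomplete_moduli.
Proof. by vm_compute. Qed.

Lemma incomplete_moduliP (m : nat) : m \in unzip1 incomplete_moduli ->
  forall a b : int, ~ complete_mod a b m.
Proof.
case/mapP=> [[d P] /(allP incomplete_moduli_certified) /and3P [d0 P0 cert] ->].
exact: incomplete_certP cert.
Qed.

(* Moduli m for which every Gibonacci sequence with coprime seeds is complete,
   each paired with a number of terms sufficient to cover all residues. *)
Definition complete_moduli : seq (nat * nat) :=
  [:: (2, 3); (4, 6); (6, 24); (7, 16); (14, 48)].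

Lemma complete_moduli_certified :
  all (fun mN => (0 < mN.1) && complete_cert mN.1 mN.2) complete_moduli.
Proof. by vm_compute. Qed.

Lemma complete_moduliP (m : nat) : m \in unzip1 complete_moduli ->
  forall a b : int, coprimez a b -> complete_mod a b m.
Proof.
case/mapP=> [[d N] /(allP complete_moduli_certified) /andP [d0 cert] ->].
exact: complete_certP cert.
Qed.

(* Necessity: every
   prime divisor of m is 2, 3 or 7 (5 by hypothesis, 17 by computation,
   the others by incomplete_mod_large_prime), and m has no forbidden divisor;
   sufficiency: the certified small moduli and the powers of 3. *)
Lemma moduli_characterization (a b : int) : coprimez a b -> ~ complete_mod a b 5 ->
  forall m : nat, inM a b m <-> lucas_modulus m.
Proof.
move=> cab not5 m; split=> [[m2 complete] | [small | [j [j1 ->]]]].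
- apply: lucas_modulus_classification => // [q q_prime q_dvd | d forbidden].
    have complete_q := complete_mod_dvd complete q_dvd.
    have [q5 | q5] := eqVneq q 5; first by case: not5; rewrite -q5.
    have [q17 | q17] := eqVneq q 17.
      by rewrite q17 in complete_q; case: (incomplete_moduliP _ complete_q).
    have [// | q_not237] := boolP (q \in [:: 2; 3; 7]).
    case: (incomplete_mod_large_prime q_prime _ complete_q).
    by move: q_not237 q5 q17; rewrite !inE; lia.
  apply/negP => d_dvd; apply: (incomplete_moduliP _ (complete_mod_dvd complete d_dvd)).
  by rewrite /= inE forbidden orbT.
- by split; [exact: (allP (isT : all (leq 2) [:: 2; 4; 6; 7; 14])) | exact: complete_moduliP].
- by split; [rewrite (leq_trans (isT : 2 <= 3 ^ 1)) // leq_exp2l | exact: complete_mod_pow3].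
Qed.

End Moduli.

(* The Lucas numbers are never divisible by 5: their residues modulo 5 run
   through the cycle 1, 3, 4, 2. *)
Lemma lucas_mod5_neq0 (n : nat) : (lucas n %% 5)%Z != 0%R.
Proof.
rewrite /lucas gib_mod (_ : ((1 %% 5)%Z, (3 %% 5)%Z) = (1, 3)%R) //.
by apply: contraTneq (@residues_periodic 5 4 n.-1 (1, 3)%R isT (erefl _)) => ->.
Qed.

Lemma lucas_cycle_incomplete5 (a b : int) :
  (exists r : nat, forall n : nat, (1 <= n)%N -> (gib a b n = lucas (n + r) %[mod 5])%Z) ->
  ~ complete_mod a b 5.
Proof.
case=> r cycle complete; have [n [n1 hit0]] := complete 0%R.
by move/eqP: (lucas_mod5_neq0 (n + r)); rewrite -cycle // hit0.
Qed.

(* Both the given sequence and the Lucas sequence have the Lucas cycle mod 5,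
   so both have M_L as their set of moduli of completeness. *)
Theorem mainTheorem14 (a b : int) :
  coprimez a b ->
  (exists r : nat, forall n : nat, (1 <= n)%N ->
     (gib a b n = lucas (n + r) %[mod 5])%Z) ->
  (forall m : nat, inM a b m <-> inML m) /\
  (forall m : nat, inML m <->
     (m \in [:: 2; 4; 6; 7; 14]%N \/ exists j : nat, (1 <= j)%N /\ m = (3 ^ j)%N)).
Proof.
move=> cab lucas_cycle.
have lucas_moduli : forall m, inML m <-> lucas_modulus m.
  apply: moduli_characterization => //; apply: lucas_cycle_incomplete5.
  by exists 0 => n _; rewrite addn0.
split=> m; last exact: lucas_moduli.
apply: iff_trans (iff_sym (lucas_moduli m)).
exact: moduli_characterization cab (lucas_cycle_incomplete5 lucas_cycle) m.
Qed.
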